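(* Suppose that the penalties $\widehat C_1,\widehat C_2,\dots$ are such that, for some constant $\gamma>0$ and for all $k\ge 1$, $$\mathbb P\{\widehat C_k\le (L-\widehat L)(\hat f_k)\}\le \frac{\gamma}{n^2k^2}.$$ Then $$\mathbb E L(\hat f)-L^*\le \inf_{k\ge1}\bigl[L_k^*-L^*+\mathbb E\widehat C_k\bigr]+\frac{2\gamma}{n^2}.$$
   Context: Let $(X,Y)$ be a random pair taking values in $\mathbb R^d\times\{0,1\}$ with arbitrary distribution, and let $\mathcal D_n=((X_1,Y_1),\dots,(X_n,Y_n))$ be $n$ i.i.d. copies of $(X,Y)$, independent of $(X,Y)$. A classifier is a measurable map $f:\mathbb R^d\to\{0,1\}$. Its loss is $L(f)=\mathbb P\{f(X)\ne Y\}$ (for a classifier chosen from the data, $L(f)=\mathbb P\{f(X)\neq Y\mid\mathcal D_n\}$), its empirical loss is $\widehat L(f)=\frac1n\sum_{i=1}^n\mathbb I\{f(X_i)\ne Y_i\}$, and $(L-\widehat L)(f)=L(f)-\widehat L(f)$. Let $L^*=\inf_f L(f)$, the infimum over all classifiers. Let $\mathcal F_1,\mathcal F_2,\dots$ be fixed (non-random) classes of classifiers; $\hat f_k\in\mathcal F_k$ denotes a minimizer of $\widehat L$ over $\mathcal F_k$, and $L_k^*=\inf_{f\in\mathcal F_k}L(f)$. The penalties $\widehat C_k$, $k\ge1$, are nonnegative random variables that are measurable functions of $\mathcal D_n$. The penalized estimator is $\hat f=\hat f_{\hat k}$ where $\hat k\in\arg\min_{k\ge1}(\widehat L(\hat f_k)+\widehat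 C_k)$ (assumed to exist). All quantities are assumed measurable. *)

From HB Require Import structures.
From mathcomp Require Import all_boot all_order all_algebra.
From mathcomp Require Import all_classical all_reals all_analysis.
Set Implicit Arguments. Unset Strict Implicit. Unset Printing Implicit Defensive.
Import Order.TTheory GRing.Theory Num.Theory.
Local Open Scope classical_set_scope.
Local Open Scope ring_scope.

(* R^d is represented by d.-tuple R, carrying the product (= Borel)
   sigma-algebra generated by the coordinate projections (library instance). *)
Notation labpt R d := (d.-tuple R * bool)%type.

Section defs.
Variables (R : realType) (d : nat).

Definition classifier (f : d.-tuple R -> bool) : Prop := measurable_fun setT f.

Definition loss (mu : probability (labpt R d) R) (f : d.-tuple R -> bool) : R :=
  fine (mu [set z | f z.1 != z.2]).

Definition emp_loss n (s : n.-tuple (labpt R d)) (f : d.-tuple R -> bool) : R :=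
  n%:R^-1 * \sum_(i < n) (f (tnth s i).1 != (tnth s i).2)%:R.

Definition Lstar (mu : probability (labpt R d) R) : R :=
  inf [set loss mu f | f in classifier].

Definition Lclass (mu : probability (labpt R d) R) (F : set (d.-tuple R -> bool)) : R :=
  inf [set loss mu f | f in F].

Definition iid_sample (dO : measure_display) (Omega : measurableType dO)
  (P : probability Omega R) n (D : Omega -> n.-tuple (labpt R d))
  (mu : probability (labpt R d) R) : Prop :=
  (forall i : 'I_n, measurable_fun setT (fun w => tnth (D w) i)) /\
  (forall (i : 'I_n) (A : set (labpt R d)), measurable A ->
     P ((fun w => tnth (D w) i) @^-1` A) = mu A) /\
  (forall A : 'I_n -> set (labpt R d), (forall i, measurable (A i)) ->
     P (\bigcap_(i in [set: 'I_n]) ((fun w => tnth (D w) i) @^-1` A i)) =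
     (\prod_(i < n) P ((fun w => tnth (D w) i) @^-1` A i))%E).

End defs.

From HB Require Import structures.
From mathcomp Require Import all_boot all_order all_algebra.
From mathcomp Require Import all_classical all_reals all_analysis.
From mathcomp Require Import ring lra measurable_realfun.
Import Order.TTheory GRing.Theory Num.Theory.
Local Open Scope classical_set_scope.
Local Open Scope ring_scope.

(* Let [U] be the event that some penalty fails, [Chat_k <= (L - Lhat)(fhat_k)].
   By the union bound and [sum_k 1/k^2 <= 2], [P U <= 2 gamma / n^2].  Off [U]
   the selected classifier satisfies, for every k,
   [L(fhat) < Lhat(fhat) + Chat_khat <= Lhat(fhat_k) + Chat_k], and on [U] we
   simply use [L(fhat) <= 1]; hence
   [E L(fhat) <= P U + E Lhat(fhat_k) + E Chat_k].  Finally
   [E Lhat(fhat_k) <= inf_{f in F_k} E Lhat(f) = L_k^*], since the empirical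
   loss of a fixed classifier is an unbiased estimate of its loss. *)

Lemma sum_inv_sqS_le2 (R : realFieldType) (N : nat) :
  \sum_(i < N) ((i.+1%:R : R) ^+ 2)^-1 <= 2.
Proof.
have step (a : R) : 0 < a -> ((a + 1) ^+ 2)^-1 + (a + 1)^-1 <= a^-1.
  move=> a_gt0; have a1_gt0 : 0 < a + 1 by rewrite addr_gt0.
  have -> : a^-1 = ((a + 1) ^+ 2)^-1 + (a + 1)^-1 + (a * (a + 1) ^+ 2)^-1.
    by field; rewrite ?(gt_eqF a_gt0) ?(gt_eqF a1_gt0).
  by rewrite lerDl invr_ge0 mulr_ge0 ?exprn_ge0 ?ltW.
(* the stronger invariant [sum_{i <= m} 1/(i+1)^2 + 1/(m+1) <= 2] telescopes *)
have inv m : \sum_(i < m.+1) ((i.+1%:R : R) ^+ 2)^-1 + (m.+1%:R)^-1 <= 2.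
  elim: m => [|m IHm]; first by rewrite big_ord1 expr1n invr1; lra.
  rewrite big_ord_recr /= -addrA; apply: le_trans IHm; rewrite lerD2l.
  by rewrite -[m.+2]addn1 natrD step.
case: N => [|m]; first by rewrite big_ord0.
by apply: le_trans (inv m); rewrite lerDl invr_ge0.
Qed.

Lemma measure_bigcup_inv_sq_le (R : realType) (dT : measure_display)
    (T : measurableType dT) (mu : measure T R) (A : nat -> set T) (c : R) :
  0 <= c -> (forall k, measurable (A k.+1)) ->
  (forall k, (mu (A k.+1) <= (c / k.+1%:R ^+ 2)%:E)%E) ->
  (mu (\bigcup_k A k.+1) <= (2 * c)%:E)%E.
Proof.
move=> c_ge0 mA muA.
apply: le_trans (measure_sigma_subadditive mu mA
  (bigcupT_measurable _ mA) (@subset_refl _ _)) _.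
apply: le_trans (lee_nneseries (fun k _ _ => measure_ge0 mu _) (fun k _ => muA k)) _.
apply: lime_le.
  by apply: is_cvg_nneseries => k _ _; rewrite lee_fin divr_ge0 ?exprn_ge0.
apply: nearW => N /=; rewrite sumEFin lee_fin big_mkord -mulr_sumr mulrC.
by rewrite ler_wpM2r // sum_inv_sqS_le2.
Qed.

Section nonnegative_expectation.
Context (dT : measure_display) (T : measurableType dT) (R : realType)
  (P : probability T R).
Local Open Scope ereal_scope.

Lemma ge0_expectationD (X Y : T -> R) :
  measurable_fun setT X -> measurable_fun setT Y ->
  (forall w, 0 <= X w)%R -> (forall w, 0 <= Y w)%R ->
  'E_P[X \+ Y] = 'E_P[X] + 'E_P[Y].
Proof.
move=> mX mY X_ge0 Y_ge0; rewrite unlock -ge0_integralD //.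
- by move=> w _; rewrite lee_fin.
- exact/measurable_EFinP.
- by move=> w _; rewrite lee_fin.
- exact/measurable_EFinP.
Qed.

Lemma expectation_le_probD (U : set T) (X Y : T -> R) :
  measurable U -> measurable_fun setT X -> measurable_fun setT Y ->
  (forall w, 0 <= X w <= 1)%R -> (forall w, 0 <= Y w)%R ->
  (forall w, ~ U w -> X w <= Y w)%R ->
  'E_P[X] <= P U + 'E_P[Y].
Proof.
move=> mU mX mY X01 Y_ge0 XY.
have mIU : measurable_fun setT (\1_U : T -> R) by exact: measurable_indic.
rewrite -expectation_indic // -ge0_expectationD //.
apply: expectation_le => //.
- exact: measurable_funD.
- by move=> w; case/andP: (X01 w).
- by move=> w; rewrite addr_ge0.
apply: aeW => w /=; have /andP[X_ge0 X_le1] := X01 w.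
have [Uw|Uw] := pselect (U w).
  by rewrite indicE mem_set // (le_trans X_le1) // lerDl.
by rewrite indicE memNset // add0r XY.
Qed.

End nonnegative_expectation.

Section loss.
Context {R : realType} {d : nat}.

Lemma measurable_misclassified {f : d.-tuple R -> bool} :
  classifier f -> measurable [set z : labpt R d | f z.1 != z.2].
Proof.
move=> mf; have mf1 : measurable_fun setT (f \o fst : labpt R d -> bool).
  exact: measurableT_comp mf measurable_fst.
have -> : [set z : labpt R d | f z.1 != z.2] =
    ((f \o fst) @^-1` [set true] `&` snd @^-1` [set false]) `|`
    ((f \o fst) @^-1` [set false] `&` snd @^-1` [set true]).
  apply/seteqP; split => -[x b] /=; rewrite /preimage /=.
    by case: (f x); case: b => //= _; [left|right].
  by case: (f x); case: b => //= -[] [].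
by apply: measurableU; apply: measurableI; rewrite -[X in measurable X]setTI;
  [apply: mf1|apply: measurable_snd|apply: mf1|apply: measurable_snd].
Qed.

Lemma misclassifiedE (mu : probability (labpt R d) R) f :
  classifier f -> mu [set z | f z.1 != z.2] = (loss mu f)%:E.
Proof.
move=> /measurable_misclassified mA; rewrite /loss fineK // ge0_fin_numE //.
by rewrite (le_lt_trans (probability_le1 mu mA)) // ltry.
Qed.

Lemma loss_ge0 (mu : probability (labpt R d) R) f : 0 <= loss mu f.
Proof. by rewrite /loss fine_ge0. Qed.

Lemma loss_le1 (mu : probability (labpt R d) R) f :
  classifier f -> loss mu f <= 1.
Proof.
move=> cf; rewrite -lee_fin -misclassifiedE //.
exact: probability_le1 (measurable_misclassified cf).
Qed.

Lemma emp_loss_ge0 {n} (s : n.-tuple (labpt R d)) f : 0 <= emp_loss s f.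
Proof. by rewrite /emp_loss mulr_ge0 // ?invr_ge0 // sumr_ge0. Qed.

End loss.

Section iid_sample.
Context {R : realType} {d n : nat} {dO : measure_display}
  {Omega : measurableType dO} {P : probability Omega R}
  {mu : probability (labpt R d) R} {D : Omega -> n.-tuple (labpt R d)}.
Hypotheses (n_gt0 : (0 < n)%N) (iidD : iid_sample P D mu).

Let misclassified_at f (i : 'I_n) :=
  (fun w => tnth (D w) i) @^-1` [set z : labpt R d | f z.1 != z.2].

Let emp_lossE f w :
  emp_loss (D w) f = n%:R^-1 * \sum_(i < n) \1_(misclassified_at f i) w.
Proof.
rewrite /emp_loss; congr (_ * _); apply: eq_bigr => i _.
rewrite indicE; congr (nat_of_bool _)%:R.
by apply/idP/idP => [/mem_set|/set_mem].
Qed.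

Let measurable_misclassified_at f i :
  classifier f -> measurable (misclassified_at f i).
Proof.
move=> cf; have [mDi _] := iidD; rewrite -[X in measurable X]setTI.
exact: mDi i measurableT _ (measurable_misclassified cf).
Qed.

Lemma measurable_emp_loss f :
  classifier f -> measurable_fun setT (fun w => emp_loss (D w) f).
Proof.
move=> cf; under eq_fun do rewrite emp_lossE.
apply: measurable_funM => //; apply: measurable_sum => i.
exact/measurable_indic/measurable_misclassified_at.
Qed.

Lemma expectation_emp_loss f :
  classifier f -> ('E_P[fun w => emp_loss (D w) f] = (loss mu f)%:E)%E.
Proof.
move=> cf; have P_misclassified i : P (misclassified_at f i) = (loss mu f)%:E.
  have [_ [lawD _]] := iidD.
  by rewrite /misclassified_at lawD ?misclassifiedE //; exact: measurable_misclassified.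
rewrite unlock; under eq_integral do rewrite emp_lossE EFinM -sumEFin.
rewrite ge0_integralZl //; last 2 first.
- by apply: emeasurable_sum => i; apply/measurable_EFinP;
    exact/measurable_indic/measurable_misclassified_at.
- by move=> w _; rewrite sumEFin lee_fin sumr_ge0.
rewrite ge0_integral_sum //; last first.
  by move=> i; apply/measurable_EFinP;
    exact/measurable_indic/measurable_misclassified_at.
rewrite (eq_bigr (fun=> (loss mu f)%:E)) => [|i _]; last first.
  rewrite integral_indic ?setIT //; [exact: P_misclassified|].
  exact: measurable_misclassified_at.
rewrite sumEFin sumr_const card_ord -EFinM -[loss mu f *+ n]mulr_natr mulrCA.
by rewrite mulVf ?mulr1 // pnatr_eq0 -lt0n.
Qed.

(* Each [f] in [F] is a competitor of the empirical minimiser on every sample,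
   and its expected empirical loss is [L(f)]. *)
Lemma expectation_emp_loss_argmin_le (F : set (d.-tuple R -> bool))
    (fhat : n.-tuple (labpt R d) -> d.-tuple R -> bool) :
  (forall f, F f -> classifier f) -> (forall s, F (fhat s)) ->
  (forall s f, F f -> emp_loss s (fhat s) <= emp_loss s f) ->
  measurable_fun setT (fun w => emp_loss (D w) (fhat (D w))) ->
  ('E_P[fun w => emp_loss (D w) (fhat (D w))] <= (Lclass mu F)%:E)%E.
Proof.
move=> Fcl fhatF fhat_min mfhat.
have le_loss f : F f ->
    ('E_P[fun w => emp_loss (D w) (fhat (D w))] <= (loss mu f)%:E)%E.
  move=> Ff; rewrite -expectation_emp_loss; last exact: Fcl.
  apply: expectation_le; first exact: mfhat.
  - exact: measurable_emp_loss (Fcl _ Ff).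
  - by move=> w; exact: emp_loss_ge0.
  - by move=> w; exact: emp_loss_ge0.
  - by apply: aeW => w; exact: fhat_min.
pose s0 : n.-tuple (labpt R d) := nseq_tuple n (nseq_tuple d 0, false).
have := le_loss _ (fhatF s0); move: le_loss.
have := expectation_ge0 P (fun w => emp_loss_ge0 (D w) (fhat (D w))).
case: ('E_P[fun w => emp_loss (D w) (fhat (D w))])%E => [r| |] // _ le_loss _.
rewrite lee_fin.
apply: lb_le_inf; first by exists (loss mu (fhat s0)), (fhat s0).
by move=> _ [f Ff <-]; rewrite -lee_fin le_loss.
Qed.

End iid_sample.

Lemma lee_sub2_addl (R : realType) (x y : \bar R) (a b c : R) :
  (0 <= y)%E -> (x <= c%:E + (a%:E + y))%E -> (x - b%:E - c%:E <= (a - b)%:E + y)%E.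
Proof.
case: y => [y| |] // _; last by move=> _; rewrite addey // leey.
case: x => [x| |] //=; last by move=> _; rewrite !addNye leNye.
by rewrite -!EFinD !lee_fin => ?; lra.
Qed.

Theorem lemma2p1 (R : realType) (d n : nat) (dO : measure_display)
  (Omega : measurableType dO) (P : probability Omega R)
  (mu : probability (labpt R d) R)
  (D : Omega -> n.-tuple (labpt R d))
  (F : nat -> set (d.-tuple R -> bool))
  (fhat : nat -> n.-tuple (labpt R d) -> (d.-tuple R -> bool))
  (Chat : nat -> n.-tuple (labpt R d) -> R)
  (khat : n.-tuple (labpt R d) -> nat)
  (gamma : R) :
  (0 < n)%N ->
  iid_sample P D mu ->
  (forall k f, (0 < k)%N -> F k f -> classifier f) ->
  (forall k s, (0 < k)%N -> F k (fhat k s)) ->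
  (forall k s f, (0 < k)%N -> F k f -> emp_loss s (fhat k s) <= emp_loss s f) ->
  (forall k s, (0 < k)%N -> 0 <= Chat k s) ->
  (forall k, (0 < k)%N -> measurable_fun setT (fun w => Chat k (D w))) ->
  (forall k, (0 < k)%N -> measurable_fun setT (fun w => loss mu (fhat k (D w)))) ->
  (forall k, (0 < k)%N ->
     measurable_fun setT (fun w => emp_loss (D w) (fhat k (D w)))) ->
  (forall s, (0 < khat s)%N) ->
  (forall s k, (0 < k)%N ->
     emp_loss s (fhat (khat s) s) + Chat (khat s) s
       <= emp_loss s (fhat k s) + Chat k s) ->
  measurable_fun setT (fun w => loss mu (fhat (khat (D w)) (D w))) ->
  0 < gamma ->
  (forall k, (0 < k)%N ->
     (P [set w | (Chat k (D w) <= loss mu (fhat k (D w)) - emp_loss (D w) (fhat k (D w)))%R]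
       <= (gamma / (n%:R ^+ 2 * k%:R ^+ 2))%:E)%E) ->
  ('E_P[fun w => loss mu (fhat (khat (D w)) (D w))] - (Lstar mu)%:E
    <= ereal_inf [set ((Lclass mu (F k) - Lstar mu)%:E + 'E_P[fun w => Chat k (D w)])%E
                   | k in [set k | (0 < k)%N]]
       + (2 * gamma / n%:R ^+ 2)%:E)%E.
Proof.
move=> n_gt0 iidD Fcl fhatF fhat_min Chat_ge0 mChat mloss memp khat_gt0 khat_min
  mloss_khat gamma_gt0 P_fail.
pose fail k := [set w | Chat k (D w) <= loss mu (fhat k (D w)) - emp_loss (D w) (fhat k (D w))].
have mfail k : (0 < k)%N -> measurable (fail k).
  move=> k_gt0; rewrite -[fail k]setTI.
  exact: measurable_fun_le (mChat k k_gt0) (measurable_funB (mloss k k_gt0) (memp k k_gt0)).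
pose U := \bigcup_k fail k.+1.
have P_U : (P U <= (2 * gamma / n%:R ^+ 2)%:E)%E.
  rewrite -mulrA; apply: measure_bigcup_inv_sq_le => [|k|k].
  - by rewrite divr_ge0 ?exprn_ge0 // ltW.
  - exact: mfail.
  - by rewrite -mulrA -invfM; exact: P_fail.
have selected_le k w : (0 < k)%N -> ~ U w ->
    loss mu (fhat (khat (D w)) (D w)) <= emp_loss (D w) (fhat k (D w)) + Chat k (D w).
  move=> k_gt0 Uw; apply: le_trans (khat_min (D w) k k_gt0); rewrite -lerBlDl ltW //.
  rewrite ltNge; apply/negP => fail_khat; apply: Uw.
  by exists (khat (D w)).-1; rewrite // prednK ?khat_gt0.
rewrite -leeBlDr //; apply: le_ereal_inf_tmp => _ [k k_gt0 <-].
apply: lee_sub2_addl; first by apply: expectation_ge0 => w; exact: Chat_ge0.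
have emp_le_Lclass :=
  expectation_emp_loss_argmin_le n_gt0 iidD _ _ (Fcl k^~ k_gt0) (fhatF k^~ k_gt0)
    (fun s f => fhat_min k s f k_gt0) (memp k k_gt0).
apply: le_trans (leeD P_U (leeD emp_le_Lclass (lexx _))).
rewrite -ge0_expectationD; try exact: mChat; try exact: memp.
- apply: expectation_le_probD.
  + by apply: bigcupT_measurable => j; exact: mfail.
  + exact: mloss_khat.
  + exact: measurable_funD (memp k k_gt0) (mChat k k_gt0).
  + move=> w; rewrite loss_ge0 loss_le1 //.
    exact: Fcl _ _ (khat_gt0 _) (fhatF _ _ (khat_gt0 _)).
  + by move=> w; rewrite addr_ge0 ?emp_loss_ge0 ?Chat_ge0.
  + by move=> w; exact: selected_le.
- by move=> w; exact: emp_loss_ge0.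
- by move=> w; exact: Chat_ge0.
Qed.
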